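(* Let $f\in\omega^{\subset\omega}$, let $k,n\geq 1$, and suppose $U$ is a $(k(n-1)+1)$-branching set of extensions of $f$ with $U=\bigcup_{i<k}U_i$. Then some $U_i$ contains an $n$-branching set of extensions of $f$.
   Context: $\omega^{\subset\omega}$ is the set of partial functions from $\omega$ to $\omega$ with finite domain. For $f\in\omega^{\subset\omega}$, an $n$-branching set of extensions of $f$ of length $k$ is defined by induction on $k$: of length $1$, it is a set $U$ of $n$ functions such that for some fixed $x\notin\operatorname{dom}(f)$ each $g\in U$ satisfies $f\subseteq g$ and $\operatorname{dom}(g)=\operatorname{dom}(f)\cup\{x\}$; if $U_0$ is an $n$-branching set of extensions of $f$ of length $k$ and for each $g\in U_0$, $U_g$ is an $n$-branching set of extensions of $g$ of length $1$, then $\bigcup_{g\in U_0}U_g$ is an $n$-branching set of extensions of $f$ of length $k+1$. An $n$-branching set of extensions is one of some length $k\geq1$. *)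

From HB Require Import structures.
From mathcomp Require Import all_boot.
From mathcomp Require Import finmap.

Set Implicit Arguments.
Unset Strict Implicit.
Unset Printing Implicit Defensive.

Local Open Scope fset_scope.
Local Open Scope fmap_scope.

(* Elements of omega^{subset omega}: finite partial functions nat -> nat. *)
Definition pfun := {fmap nat -> nat}.

Definition pfun_sub (f g : pfun) : Prop :=
  forall x v, f.[? x] = Some v -> g.[? x] = Some v.

Definition branch1 (n : nat) (f : pfun) (U : {fset pfun}) : Prop :=
  #|` U| = n /\
  exists x : nat, x \notin domf f /\
    forall g, g \in U -> pfun_sub f g /\ domf g = x |` domf f.

(* branch n f k U : U is an n-branching set of extensions of f of length k+1 *)
Fixpoint branch (n : nat) (f : pfun) (k : nat) (U : {fset pfun}) : Prop :=
  match k with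
  | 0 => branch1 n f U
  | k'.+1 =>
      exists U0 : {fset pfun}, branch n f k' U0 /\
      exists V : pfun -> {fset pfun},
        (forall g, g \in U0 -> branch1 n g (V g)) /\
        (forall h, h \in U <-> exists2 g, g \in U0 & h \in V g)
  end.

Definition nbranching (n : nat) (f : pfun) (U : {fset pfun}) : Prop :=
  exists k, branch n f k U.

From mathcomp Require Import all_boot.
From mathcomp Require Import finmap.
From mathcomp Require Import zify.
From Stdlib Require Import ClassicalEpsilon.
Local Open Scope fset_scope.

(* For a tree of length 1 the claim is
   the pigeonhole principle: k classes cannot each hold at most n-1 of the
   k(n-1)+1 siblings.  For a longer tree U = \bigcup_(g in U0) V g, apply the
   length-1 case to every last level V g; this colours each g in U0 by a class
   i(g) containing n extensions of g.  The induction hypothesis applied to this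
   colouring of U0 yields an n-branching W0 of one colour i, and stacking the
   chosen n extensions of the nodes of W0 gives an n-branching set inside
   U_i. *)

Definition covered_by {T : choiceType} (k : nat) (Ui : nat -> {fset T})
    (U : {fset T}) : Prop :=
  forall h, h \in U -> exists2 i, i < k & h \in Ui i.

Lemma fsubset_card_exists (T : choiceType) (A : {fset T}) (m : nat) :
  m <= #|` A| -> exists2 B : {fset T}, B `<=` A & #|` B| = m.
Proof.
elim: m => [|m IH] lemA; first by exists fset0; rewrite ?fsub0set ?cardfs0.
have [B BA cardB] := IH (ltnW lemA).
have /fset0Pn [x /fsetDP [xA xB]] : A `\` B != fset0.
  by rewrite -cardfs_eq0 cardfsDS //; lia.
exists (x |` B); last by rewrite cardfsU1 xB cardB.
by rewrite fsubUset fsub1set xA.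
Qed.

Lemma pigeonhole_fset {T : choiceType} (k n : nat) (Ui : nat -> {fset T})
    (U : {fset T}) :
  covered_by k Ui U -> k * n < #|` U| ->
  exists2 i, i < k & n < #|` U `&` Ui i|.
Proof.
elim: k U => [|k IH] U coverU cardU.
  have /fset0Pn [h /coverU [] //] : U != fset0 by rewrite -cardfs_eq0; lia.
have [lastU | small_last] := ltnP n #|` U `&` Ui k|.
  by exists k.
have coverD : covered_by k Ui (U `\` Ui k).
  move=> h /fsetDP [hU hk]; have [i ik hi] := coverU h hU.
  exists i => //; rewrite ltn_neqAle -ltnS ik andbT.
  by apply: contraNneq hk => <-.
have [|i ik hi] := IH _ coverD; first by rewrite cardfsD; lia.
exists i; first exact: ltnW.
by apply: leq_trans hi (fsubset_leq_card _); rewrite fsetSI ?fsubDset ?fsubsetUr.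
Qed.

Lemma branch1_fsubset (n m : nat) (f : pfun) (U W : {fset pfun}) :
  branch1 m f U -> W `<=` U -> #|` W| = n -> branch1 n f W.
Proof.
move=> [_ [x [xf extU]]] WU cardW; split => //.
by exists x; split=> // g /(fsubsetP WU); apply: extU.
Qed.

Lemma branch_bigfcup (n m : nat) (f : pfun) (W0 : {fset pfun})
    (V : pfun -> {fset pfun}) :
  branch n f m W0 -> (forall g, g \in W0 -> branch1 n g (V g)) ->
  branch n f m.+1 (\bigcup_(g <- W0) V g).
Proof.
move=> branchW0 branchV; exists W0; split => //; exists V; split => // h.
split; first by case/bigfcupP => g /andP [gW0 _] hg; exists g.
by case=> g gW0 hg; apply/bigfcupP; exists g; rewrite ?gW0.
Qed.

Section Branching.
Variables (k n : nat).
Hypothesis n_gt0 : 0 < n.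

Lemma branch1_pigeonhole {f : pfun} {U : {fset pfun}}
    {Ui : nat -> {fset pfun}} :
  branch1 (k * (n - 1) + 1) f U -> covered_by k Ui U ->
  exists2 i, i < k & exists2 W, W `<=` Ui i & branch1 n f W.
Proof.
move=> branchU coverU; have [cardU _] := branchU.
have [|i ik big_i] := @pigeonhole_fset _ k (n - 1) Ui U coverU.
  by rewrite cardU; lia.
have [|W WUi cardW] := @fsubset_card_exists _ (U `&` Ui i) n; first by lia.
exists i => //; exists W; first exact: fsubset_trans WUi (fsubsetIr _ _).
exact: branch1_fsubset branchU (fsubset_trans WUi (fsubsetIl _ _)) cardW.
Qed.

Lemma branch_pigeonhole {L : nat} {f : pfun} {U : {fset pfun}}
    {Ui : nat -> {fset pfun}} :
  branch (k * (n - 1) + 1) f L U -> covered_by k Ui U ->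
  exists2 i, i < k & exists2 W, W `<=` Ui i & branch n f L W.
Proof.
elim: L f U Ui => [|L IH] f U Ui.
  move=> branchU coverU.
  have [i ik [W WUi branchW]] := branch1_pigeonhole branchU coverU.
  by exists i => //; exists W.
move=> [U0 [branchU0 [V [branchV defU]]]] coverU.
have colour g : exists p : nat * {fset pfun}, g \in U0 ->
    [/\ p.1 < k, p.2 `<=` Ui p.1 & branch1 n g p.2].
  have [gU0 | ] := boolP (g \in U0); last by exists (0, fset0).
  have coverV : covered_by k Ui (V g).
    by move=> h hV; apply/coverU/defU; exists g.
  have [i ik [W WUi branchW]] := branch1_pigeonhole (branchV g gU0) coverV.
  by exists (i, W).
have [c colourP] := choice _ colour.
have coverU0 : covered_by k (fun i => [fset g in U0 | (c g).1 == i]) U0.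
  move=> g gU0; exists (c g).1; last by rewrite !inE /= gU0 eqxx.
  by case: (colourP g gU0).
have [i ik [W0 W0_col branchW0]] := IH _ _ _ branchU0 coverU0.
have col_W0 g : g \in W0 -> g \in U0 /\ (c g).1 = i.
  by move/(fsubsetP W0_col); rewrite inE => /andP [-> /eqP].
exists i => //; exists (\bigcup_(g <- W0) (c g).2).
  apply/bigfcupsP => g gW0 _; have [gU0 <-] := col_W0 g gW0.
  by case: (colourP g gU0).
apply: branch_bigfcup branchW0 _ => g /col_W0 [gU0 _].
by case: (colourP g gU0).
Qed.

End Branching.

Theorem mainTheorem8 (f : pfun) (k n : nat) (hk : 1 <= k) (hn : 1 <= n)
  (U : {fset pfun}) (Ui : nat -> {fset pfun}) :
  nbranching (k * (n - 1) + 1) f U ->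
  (forall h, h \in U <-> exists2 i, i < k & h \in Ui i) ->
  exists2 i, i < k & exists2 W : {fset pfun}, W `<=` Ui i & nbranching n f W.
Proof.
move=> [L branchU] defU.
have coverU : covered_by k Ui U by move=> h /defU.
have [i ik [W WUi branchW]] := branch_pigeonhole k n hn branchU coverU.
by exists i => //; exists W => //; exists L.
Qed.
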